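(* The maps $\alpha_*,\gamma_*,\alpha_{\le\omega},\gamma_{\le\omega}$ are monotone and form Galois connections: for all $U\subseteq\Sigma^*$, $\mathcal U\in\mathcal M_*$, $\alpha_*(U)\subseteq\mathcal U$ iff $U\subseteq\gamma_*(\mathcal U)$; and for all $V\subseteq\Sigma^{\le\omega}$, $\mathcal V\in\mathcal M_{\le\omega}$, $\alpha_{\le\omega}(V)\subseteq\mathcal V$ iff $V\subseteq\gamma_{\le\omega}(\mathcal V)$. Moreover $\alpha_*(\gamma_*(\mathcal U))=\mathcal U$ and $\alpha_{\le\omega}(\gamma_{\le\omega}(\mathcal V))=\mathcal V$ for all $\mathcal U\in\mathcal M_*$, $\mathcal V\in\mathcal M_{\le\omega}$. Furthermore, all four maps preserve unions and least and greatest elements, and $\gamma_*$ and $\gamma_{\le\omega}$ preserve intersections.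
   Context: $\Sigma$ is a finite alphabet, $\Sigma^{\le\omega}=\Sigma^*\cup\Sigma^\omega$; concatenation $w\cdot u$ equals $wu$ if $w$ is finite and $w$ if $w$ is infinite, extended pointwise to languages. For $A\subseteq\Sigma^*$, $A^\omega$ is the set of all words $w_0w_1w_2\cdots$ with $w_i\in A$, and $CD^\omega$ means $C\cdot D^\omega$. Fix an extended Büchi automaton $\mathfrak A=(Q,\Sigma,\delta,q_0,F)$ (finite states, $\delta:Q\times\Sigma\to\mathcal P(Q)$, initial $q_0$, final $F$). For $w\in\Sigma^*$ write $p\overset{w}{\leadsto}q$ if $q$ is reachable from $p$ reading $w$, and $p\overset{w}{\leadsto}_F q$ if there are $q''\in F$, $w=uv$ with $p\overset{u}{\leadsto}q''\overset{v}{\leadsto}q$. For $w,u\in\Sigma^+$, $w\sim u$ iff for all $p,q$: $p\overset{w}{\leadsto}q\Leftrightarrow p\overset{u}{\leadsto}q$ and $p\overset{w}{\leadsto}_Fq\Leftrightarrow p\overset{u}{\leadsto}_Fq$. $\mathcal Q=\Sigma^+/{\sim}\uplus\{[\epsilon]\}$ with $[\epsilon]=\{\epsilon\}$; concatenation of classes is well defined. Let $\mathcal C=\{(C,D)\mid C,D\in\mathcal Q,\ CD=C,\ DD=D\}$. Define $\mathfrak f(V)=\{(C,D)\in\mathcal C\mid CD^\omega\cap V\neq\emptyset\}$ for $V\subseteq\Sigma^{\le\omega}$ and $\mathfrak g(\mathcal V)=\bigcup_{(C,D)\in\mathcal V}CD^\omega$ for $\mathcal V\subseteq\mathcal C$.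 $\mathcal V$ is closed if $\mathfrak f(\mathfrak g(\mathcal V))=\mathcal V$; the closure is $\mathfrak c(\mathcal V)=\bigcup_{n\ge1}(\mathfrak f\circ\mathfrak g)^n(\mathcal V)$. $\mathcal M_{\le\omega}=\{\mathfrak c(\mathfrak f(V))\mid V\subseteq\Sigma^{\le\omega}\}$ and $\mathcal M_*=\mathcal P(\mathcal Q)$, both ordered by inclusion. Abstraction functions: $\alpha_*(U)=\{C\in\mathcal Q\mid C\cap U\neq\emptyset\}$ for $U\subseteq\Sigma^*$, and $\alpha_{\le\omega}(V)=\mathfrak c(\mathfrak f(V))$ for $V\subseteq\Sigma^{\le\omega}$. Concretization functions: $\gamma_*(\mathcal U)=\bigcup_{C\in\mathcal U}C$ and $\gamma_{\le\omega}(\mathcal V)=\mathfrak g(\mathcal V)$. *)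

From mathcomp Require Import all_boot.
Set Implicit Arguments. Unset Strict Implicit. Unset Printing Implicit Defensive.

Definition incl {T : Type} (A B : T -> Prop) : Prop := forall x, A x -> B x.
Definition seteq {T : Type} (A B : T -> Prop) : Prop := forall x, A x <-> B x.
Definition incl2 {T : Type} (A B : T -> T -> Prop) : Prop :=
  forall x y, A x y -> B x y.
Definition seteq2 {T : Type} (A B : T -> T -> Prop) : Prop :=
  forall x y, A x y <-> B x y.

Section Automaton.
Variable Sigma : finType.

Inductive lword : Type :=
| Fin of seq Sigma
| Inf of (nat -> Sigma).

Definition lang := seq Sigma -> Prop.

Definition lcat_w (w : seq Sigma) (x : lword) : lword :=
  match x with
  | Fin u => Fin (w ++ u)
  | Inf s => Inf (fun i => if i < size w then nth (s 0) w i else s (i - size w))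
  end.

Definition prefix_cat (ws : nat -> seq Sigma) (N : nat) : seq Sigma :=
  flatten [seq ws i | i <- iota 0 N].

(* x is the (possibly finite) infinite concatenation ws 0 . ws 1 . ws 2 ... *)
Definition oconcat (ws : nat -> seq Sigma) (x : lword) : Prop :=
  match x with
  | Fin u => exists N, (forall n, N <= n -> ws n = [::]) /\ u = prefix_cat ws N
  | Inf s => (forall N, exists n, N <= n /\ ws n <> [::]) /\
             (forall N, prefix_cat ws N = mkseq s (size (prefix_cat ws N)))
  end.

Definition omega_pow (A : lang) (x : lword) : Prop :=
  exists ws : nat -> seq Sigma, (forall i, A (ws i)) /\ oconcat ws x.

Definition CDomega (C D : lang) (x : lword) : Prop :=
  exists c y, C c /\ omega_pow D y /\ x = lcat_w c y.


Variable Q : finType.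
Variable delta : Q -> Sigma -> {set Q}.
Variable F : {set Q}.

Fixpoint reach (p : Q) (w : seq Sigma) (q : Q) : Prop :=
  match w with
  | [::] => p = q
  | a :: w' => exists p', p' \in delta p a /\ reach p' w' q
  end.

Definition reachF (p : Q) (w : seq Sigma) (q : Q) : Prop :=
  exists q'' u v, q'' \in F /\ w = u ++ v /\ reach p u q'' /\ reach q'' v q.

(* w ~ u (intended for nonempty words) *)
Definition sim (w u : seq Sigma) : Prop :=
  forall p q, (reach p w q <-> reach p u q) /\ (reachF p w q <-> reachF p u q).

Definition cls_of (w : seq Sigma) : lang :=
  match w with
  | [::] => fun u => u = [::]
  | _ :: _ => fun u => u <> [::] /\ sim w u
  end.

Definition isClass (C : lang) : Prop := exists w, C = cls_of w.

(* product of classes: [c][d] = [cd] (well defined by the paper);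
   for C, D classes this is the class of cd for any representatives. *)
Definition cls_mul (C D : lang) : lang :=
  fun u => exists c d, C = cls_of c /\ D = cls_of d /\ cls_of (c ++ d) u.

Definition isPair (C D : lang) : Prop :=
  isClass C /\ isClass D /\ cls_mul C D = C /\ cls_mul D D = D.

Definition ffam (V : lword -> Prop) : lang -> lang -> Prop :=
  fun C D => isPair C D /\ exists x, CDomega C D x /\ V x.

Definition gfam (VV : lang -> lang -> Prop) : lword -> Prop :=
  fun x => exists C D, VV C D /\ CDomega C D x.

Fixpoint fg_iter (n : nat) (VV : lang -> lang -> Prop) : lang -> lang -> Prop :=
  match n with
  | 0 => VV
  | n'.+1 => ffam (gfam (fg_iter n' VV))
  end.

Definition closure (VV : lang -> lang -> Prop) : lang -> lang -> Prop :=
  fun C D => exists n, 1 <= n /\ fg_iter n VV C D.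

Definition alpha_star (U : lang) : lang -> Prop :=
  fun C => isClass C /\ exists u, C u /\ U u.
Definition gamma_star (UU : lang -> Prop) : lang :=
  fun u => exists C, UU C /\ C u.
Definition alpha_le (V : lword -> Prop) : lang -> lang -> Prop :=
  closure (ffam V).
Definition gamma_le (VV : lang -> lang -> Prop) : lword -> Prop := gfam VV.

Definition inMstar (UU : lang -> Prop) : Prop := forall C, UU C -> isClass C.
Definition inMle (VV : lang -> lang -> Prop) : Prop :=
  exists V : lword -> Prop, seteq2 VV (alpha_le V).

End Automaton.

(* 1. Reading a concatenation decomposes into reading the factors, so ~ is a
      congruence and the class of cd only depends on [c] and [d].
   2. Infinite Ramsey theorem for finite colourings of pairs of naturals.
   3. Covering lemma: every finite or infinite word x lies in C.D^omega for
      some pair (C, D) with CD = C, DD = D.  For infinite x, colour the pair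
      i < j by the profile of the factor x[i, j) and apply Ramsey's theorem.
   4. The closure c = U_n (f o g)^n is monotone and idempotent, and closed
      families are fixed points of f o g.
   5. Galois connections, alpha o gamma = id, and preservation of unions,
      extremal elements and intersections.  The finite-word part rests on
      "a class containing u is [u]", the general part on the covering lemma
      and closedness; extremal elements follow from the Galois connections.
   The theorem lemma8 collects these facts.  *)

From Pilot Require Import Defs.
From mathcomp Require Import all_boot zify.
From Stdlib Require Import Classical ClassicalEpsilon.
From Stdlib Require Import FunctionalExtensionality PropExtensionality.
Set Implicit Arguments. Unset Strict Implicit. Unset Printing Implicit Defensive.

Lemma seteq2E (T : Type) (A B : T -> T -> Prop) : seteq2 A B -> A = B.
Proof.
move=> AB; apply: functional_extensionality => x.
apply: functional_extensionality => y; exact: propositional_extensionality.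
Qed.

Section Classes.
Variables (Sigma Q : finType) (delta : Q -> Sigma -> {set Q}) (F : {set Q}).

Notation reach := (@reach Sigma Q delta).
Notation reachF := (@reachF Sigma Q delta F).
Notation sim := (@sim Sigma Q delta F).
Notation cls_of := (@cls_of Sigma Q delta F).
Notation cls_mul := (@cls_mul Sigma Q delta F).
Notation isClass := (@isClass Sigma Q delta F).

Lemma reach_cat p u v q :
  reach p (u ++ v) q <-> exists r, reach p u r /\ reach r v q.
Proof.
elim: u p => [|a u IH] p /=.
  by split=> [puvq|[r [-> rvq]]]; first exists p.
split=> [[p' [pp' /IH [r [p'ur rvq]]]]|[r [[p' [pp' p'ur]] rvq]]].
  by exists r; split=> //; exists p'.
by exists p'; split=> //; apply/IH; exists r.
Qed.

Lemma cat_split (u v a b : seq Sigma) : u ++ v = a ++ b ->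
  (exists t, a = u ++ t /\ v = t ++ b) \/ (exists t, u = a ++ t /\ b = t ++ v).
Proof.
elim: u a => [|x u IH] [|y a] //=.
- by move=> ->; left; exists [::].
- by move=> ->; left; exists (y :: a).
- by move=> <-; right; exists (x :: u).
case=> -> /IH [[t [-> ->]]|[t [-> ->]]]; [left|right]; by exists t.
Qed.

Lemma reachF_cat p u v q : reachF p (u ++ v) q <->
  exists r, (reachF p u r /\ reach r v q) \/ (reach p u r /\ reachF r v q).
Proof.
split.
  move=> [f [a [b [fF [uv_ab [paf fbq]]]]]].
  case: (cat_split uv_ab) => [[t [? ?]]|[t [? ?]]]; subst.
    have [r [pur rtf]] := (reach_cat p u t f).1 paf.
    by exists r; right; split=> //; exists f, t, b.
  have [r [ftr rvq]] := (reach_cat f t v q).1 fbq.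
  by exists r; left; split=> //; exists f, a, t.
move=> [r [[[f [a [b [fF [-> [paf fbr]]]]]] rvq]|[pur [f [a [b [fF [-> [raf fbq]]]]]]]]].
  exists f, a, (b ++ v); rewrite catA; do !split=> //.
  by apply/reach_cat; exists r.
exists f, (u ++ a), b; rewrite catA; do !split=> //.
by apply/reach_cat; exists r.
Qed.

Lemma sim_sym w u : sim w u -> sim u w.
Proof. by move=> wu p q; have [? ?] := wu p q; split; symmetry. Qed.

Lemma sim_trans w u v : sim w u -> sim u v -> sim w v.
Proof.
move=> wu uv p q; have [? ?] := wu p q; have [? ?] := uv p q.
by split; apply: iff_trans; eassumption.
Qed.

Lemma sim_cat c c' d d' : sim c c' -> sim d d' -> sim (c ++ d) (c' ++ d').
Proof.
move=> cc' dd' p q; split.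
  by rewrite !reach_cat; setoid_rewrite (fun r => (cc' p r).1);
     setoid_rewrite (fun r => (dd' r q).1).
rewrite !reachF_cat; setoid_rewrite (fun r => (cc' p r).1);
  setoid_rewrite (fun r => (cc' p r).2); setoid_rewrite (fun r => (dd' r q).1).
by setoid_rewrite (fun r => (dd' r q).2).
Qed.

Lemma cls_ofE w u : cls_of w u <-> nilp w = nilp u /\ sim w u.
Proof. by case: w => [|a w]; case: u => [|b u] //=; split=> // -[]. Qed.

Lemma cls_of_self w : cls_of w w.
Proof. by apply/cls_ofE; split. Qed.

Lemma cls_of_eq w u : cls_of w u -> cls_of w = cls_of u.
Proof.
move=> /cls_ofE [nil_wu wu]; apply: functional_extensionality => x.
apply: propositional_extensionality; rewrite !cls_ofE nil_wu.
by split=> -[-> ?]; split=> //; [apply: sim_trans (sim_sym wu) _|apply: sim_trans wu _].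
Qed.

Lemma class_mem C u : isClass C -> C u -> C = cls_of u.
Proof. by move=> [w ->]; apply: cls_of_eq. Qed.

Lemma cls_of_cat c c' d d' : cls_of c = cls_of c' -> cls_of d = cls_of d' ->
  cls_of (c ++ d) = cls_of (c' ++ d').
Proof.
move=> cc' dd'; have /cls_ofE [nil_c sim_c] : cls_of c c' by rewrite cc'; apply: cls_of_self.
have /cls_ofE [nil_d sim_d] : cls_of d d' by rewrite dd'; apply: cls_of_self.
apply: cls_of_eq; apply/cls_ofE; split; last exact: sim_cat.
by rewrite /nilp !size_cat !addn_eq0 -!/(nilp _) nil_c nil_d.
Qed.

Lemma cls_mul_of c d : cls_mul (cls_of c) (cls_of d) = cls_of (c ++ d).
Proof.
apply: functional_extensionality => x; apply: propositional_extensionality.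
split=> [[c' [d' [cc' [dd' c'd'x]]]]|cdx]; last by exists c, d.
by rewrite (cls_of_cat cc' dd').
Qed.

End Classes.

Definition infinite (P : nat -> Prop) : Prop := forall N, exists2 n, N <= n & P n.

Lemma pigeon (K : finType) (P : nat -> Prop) (f : nat -> K) : infinite P ->
  exists k, infinite (fun n => P n /\ f n = k).
Proof.
move=> infP; apply: NNPP => no_colour.
have bounded k : exists N, forall n, N <= n -> P n -> f n <> k.
  apply: NNPP => unbounded; apply: no_colour; exists k => N.
  apply: NNPP => none; apply: unbounded; exists N => n Nn Pn fnk.
  by apply: none; exists n.
have avoid (s : seq K) : exists N, forall n, N <= n -> P n -> f n \notin s.
  elim: s => [|k s [N avoid_s]]; first by exists 0.
  have [N' avoid_k] := bounded k; exists (maxn N N') => n; rewrite geq_max.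
  move=> /andP [Nn N'n] Pn; rewrite in_cons negb_or avoid_s // andbT.
  by apply/eqP; apply: avoid_k.
have [N avoid_all] := avoid (enum K); have [n Nn Pn] := infP N.
by move: (avoid_all n Nn Pn); rewrite mem_enum.
Qed.

Lemma infinite_enum (P : nat -> Prop) : infinite P ->
  exists m : nat -> nat, (forall j, m j < m j.+1) /\ (forall j, P (m j)).
Proof.
move=> infP; have next N : {n | N <= n /\ P n}.
  by apply: constructive_indefinite_description; have [n] := infP N; exists n.
exists (fun j => iter j (fun n => sval (next n.+1)) (sval (next 0))).
split=> [j|[|j]]; [exact: (svalP (next _)).1|exact: (svalP (next _)).2..].
Qed.

Section Ramsey.
Variables (K : finType) (c : nat -> nat -> K).

(* A stage is a point together with an infinite reservoir of later points;
   stage t refines stage s with colour k when the point of t lies in the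
   reservoir of s, and the reservoir of t consists of points of the reservoir
   of s, beyond the point of t, that all get colour k with the point of s. *)
Definition refines (s t : nat * (nat -> Prop)) (k : K) : Prop :=
  [/\ s.2 t.1, c s.1 t.1 = k, infinite t.2 &
      forall b, t.2 b -> [/\ s.2 b, c s.1 b = k & t.1 < b]].

Lemma refines_ex s : infinite s.2 -> exists tk, refines s tk.1 tk.2.
Proof.
case: s => a A /= infA; have [k infAk] := pigeon (c a) infA.
have [a' _ [Aa' ca'k]] := infAk 0.
exists ((a', fun b => (A b /\ c a b = k) /\ a' < b), k); split=> //=.
- move=> N; have [n] := infAk (maxn N a'.+1).
  by rewrite geq_max => /andP [Nn a'n] Akn; exists n.
- by move=> b [[Ab cabk] a'b].
Qed.

Definition refine (s : nat * (nat -> Prop)) : (nat * (nat -> Prop)) * K :=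
  epsilon (inhabits ((0, fun _ => True), c 0 0)) (fun tk => refines s tk.1 tk.2).

Definition stage (i : nat) : nat * (nat -> Prop) :=
  iter i (fun s => (refine s).1) (0, fun b : nat => is_true (0 < b)).

Definition stage_colour (i : nat) : K := (refine (stage i)).2.

Lemma stage_refines i : refines (stage i) (stage i.+1) (stage_colour i).
Proof.
have spec s : infinite s.2 -> refines s (refine s).1 (refine s).2.
  by move=> infs; apply: (epsilon_spec _ (fun tk => refines s tk.1 tk.2)); apply: refines_ex.
elim: i => [|i [_ _ inf_next _]]; apply: spec => //.
by move=> N; exists N.+1.
Qed.

Lemma stage_sub i j b : i <= j -> (stage j).2 b -> (stage i).2 b.
Proof.
move=> ij; apply: (@homo_leq _ (fun k => (stage k).2)
                     (fun A B : nat -> Prop => forall b, B b -> A b)) ij b.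
- by [].
- by move=> B A C AB BC b /BC /AB.
- by move=> k b; case: (stage_refines k) => _ _ _ /(_ b) sub /sub [].
Qed.

Lemma stage_colourE i j : i < j -> c (stage i).1 (stage j).1 = stage_colour i.
Proof.
case: j => // j; rewrite ltnS leq_eqVlt => /orP [/eqP <-|ij].
  by case: (stage_refines i).
have [_ _ _ /(_ (stage j.+1).1)] := stage_refines i; case=> //.
by apply: stage_sub ij _; case: (stage_refines j).
Qed.

Lemma stage_increasing i : (stage i).1 < (stage i.+1).1.
Proof.
have [next_in _ _ _] := stage_refines i.
case: i next_in => [//|i]; case: (stage_refines i) => _ _ _ sub /sub [] //.
Qed.

Theorem ramsey : exists (a : nat -> nat) (k : K),
  (forall i, a i < a i.+1) /\ (forall i j, i < j -> c (a i) (a j) = k).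
Proof.
have [k inf_k] :=
  pigeon stage_colour (P := fun _ => True) (fun N => ex_intro2 _ _ N (leqnn N) I).
have [m [m_incr m_k]] := infinite_enum inf_k.
exists (fun j => (stage (m j)).1), k; split.
  by move=> i; apply: (homo_ltn ltn_trans stage_increasing).
move=> i j ij; rewrite stage_colourE; first by case: (m_k i).
exact: (homo_ltn ltn_trans m_incr).
Qed.

End Ramsey.

Section Cover.
Variables (Sigma Q : finType) (delta : Q -> Sigma -> {set Q}) (F : {set Q}).

Notation reach := (@reach Sigma Q delta).
Notation reachF := (@reachF Sigma Q delta F).
Notation cls_of := (@cls_of Sigma Q delta F).
Notation isPair := (@isPair Sigma Q delta F).

Definition truth (P : Prop) : bool := if excluded_middle_informative P then true else false.

Lemma truthP (P : Prop) : truth P <-> P.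
Proof. by rewrite /truth; case: excluded_middle_informative. Qed.

(* A finite-valued invariant of a word determining its class: emptiness and
   the reachability and F-reachability relations it induces. *)
Definition profile (w : seq Sigma) :
    bool * {ffun Q * Q -> bool} * {ffun Q * Q -> bool} :=
  (nilp w, [ffun pq => truth (reach pq.1 w pq.2)],
           [ffun pq => truth (reachF pq.1 w pq.2)]).

Lemma profile_cls w u : profile w = profile u -> cls_of w = cls_of u.
Proof.
case=> nil_wu reach_wu reachF_wu; apply: cls_of_eq; apply/cls_ofE; split=> // p q.
have := congr1 (fun f : {ffun Q * Q -> bool} => f (p, q)) reach_wu.
have := congr1 (fun f : {ffun Q * Q -> bool} => f (p, q)) reachF_wu.
rewrite !ffunE /= => reachF_pq reach_pq.
by rewrite -(truthP (reach p w q)) -(truthP (reachF p w q)) reach_pq reachF_pq !truthP.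
Qed.

(* A finite word u lies in [u] [eps]^omega, and ([u], [eps]) is a pair. *)
Lemma cover_fin u : exists C D, isPair C D /\ CDomega C D (Fin u).
Proof.
exists (cls_of u), (cls_of [::]); split.
  split; first by exists u.
  by split; [exists [::]|rewrite !cls_mul_of cats0].
exists u, (Fin [::]); split; first exact: cls_of_self.
split; last by rewrite /= cats0.
by exists (fun=> [::]); split=> [_|]; [apply: cls_of_self|exists 0].
Qed.

Section InfiniteWord.
Variable s : nat -> Sigma.

Definition slice (i j : nat) : seq Sigma := map s (iota i (j - i)).

Lemma slice_cat i j k : i <= j -> j <= k -> slice i j ++ slice j k = slice i k.
Proof.
move=> ij jk; rewrite /slice -map_cat (_ : k - i = (j - i) + (k - j)); last by lia.
by rewrite iotaD subnKC.
Qed.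

Section Homogeneous.
Variable a : nat -> nat.
Hypothesis a_incr : forall i, a i < a i.+1.
Hypothesis a_hom : forall i j, i < j ->
  cls_of (slice (a i) (a j)) = cls_of (slice (a 1) (a 2)).

Let a_le i j : i <= j -> a i <= a j.
Proof. exact: homo_leq leqnn leq_trans (fun k => ltnW (a_incr k)) i j. Qed.

Lemma homogeneous_pair :
  isPair (cls_of (slice 0 (a 1))) (cls_of (slice (a 1) (a 2))).
Proof.
split; first by eexists.
split; first by eexists.
rewrite !cls_mul_of; split.
  rewrite slice_cat ?a_le // -(@slice_cat 0 (a 0) (a 2)) ?a_le //.
  rewrite -(@slice_cat 0 (a 0) (a 1)) ?a_le //.
  by apply: cls_of_cat; rewrite // !a_hom.
have -> : cls_of (slice (a 1) (a 2) ++ slice (a 1) (a 2)) =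
          cls_of (slice (a 1) (a 2) ++ slice (a 2) (a 3)).
  by apply: cls_of_cat; rewrite // a_hom.
by rewrite slice_cat ?a_le // a_hom.
Qed.

Lemma homogeneous_CDomega :
  CDomega (cls_of (slice 0 (a 1))) (cls_of (slice (a 1) (a 2))) (Inf s).
Proof.
pose ws i := slice (a i.+1) (a i.+2).
have prefix_ws N : prefix_cat ws N = slice (a 1) (a N.+1).
  elim: N => [|N IH]; first by rewrite /slice subnn.
  by rewrite /prefix_cat -addn1 iotaD map_cat flatten_cat -/(prefix_cat ws N) IH
     /= cats0 add0n addn1 slice_cat ?a_le.
exists (slice 0 (a 1)), (Inf (fun i => s (a 1 + i))); split; first exact: cls_of_self.
split.
  exists ws; split.
    by move=> i; rewrite /ws -(a_hom (ltnSn i.+1)); apply: cls_of_self.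
  split=> [N|N].
    exists N; split=> //; rewrite /ws /slice.
    by have := a_incr N.+1; rewrite -subn_gt0; case: (a N.+2 - a N.+1).
  rewrite prefix_ws /slice size_map size_iota /mkseq.
  by rewrite -{1}[a 1]addn0 iotaDl -map_comp.
congr Inf; apply: functional_extensionality => i.
rewrite /slice subn0 size_map size_iota; case: ifP => i_lt.
  by rewrite (nth_map 0) ?size_iota // nth_iota.
by congr s; lia.
Qed.

End Homogeneous.

(* Ramsey's theorem applied to the profiles of the factors of s. *)
Lemma cover_inf : exists C D, isPair C D /\ CDomega C D (Inf s).
Proof.
have [a [k [a_incr a_k]]] := ramsey (fun i j => profile (slice i j)).
have a_hom i j : i < j -> cls_of (slice (a i) (a j)) = cls_of (slice (a 1) (a 2)).
  by move=> ij; apply: profile_cls; rewrite !a_k.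
exists (cls_of (slice 0 (a 1))), (cls_of (slice (a 1) (a 2))).
by split; [apply: homogeneous_pair|apply: homogeneous_CDomega].
Qed.

End InfiniteWord.

Lemma cover_pair x : exists C D, isPair C D /\ CDomega C D x.
Proof. by case: x => [u|s]; [apply: cover_fin|apply: cover_inf]. Qed.

End Cover.

Section Galois.
Variables (Sigma Q : finType) (delta : Q -> Sigma -> {set Q}) (F : {set Q}).

Notation cls_of := (@cls_of Sigma Q delta F).
Notation isPair := (@isPair Sigma Q delta F).
Notation ffam := (@ffam Sigma Q delta F).
Notation gfam := (@gfam Sigma).
Notation fg_iter := (@fg_iter Sigma Q delta F).
Notation closure := (@Defs.closure Sigma Q delta F).
Notation aS := (@alpha_star Sigma Q delta F).
Notation gS := (@gamma_star Sigma).
Notation aL := (@alpha_le Sigma Q delta F).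
Notation gL := (@gamma_le Sigma).
Notation MS := (@inMstar Sigma Q delta F).
Notation ML := (@inMle Sigma Q delta F).

Lemma ffam_mono V V' : incl V V' -> incl2 (ffam V) (ffam V').
Proof. by move=> VV' C D [CD [x [x_CD /VV' Vx]]]; split=> //; exists x. Qed.

Lemma gfam_mono W W' : incl2 W W' -> incl (gfam W) (gfam W').
Proof. by move=> WW' x [C [D [/WW' W'CD x_CD]]]; exists C, D. Qed.

Lemma closure_mono W W' : incl2 W W' -> incl2 (closure W) (closure W').
Proof.
move=> WW' C D [n [n_gt0 WCD]]; exists n; split=> //.
elim: n {n_gt0} C D WCD => [//|n IH] C D /=.
exact/ffam_mono/gfam_mono/IH.
Qed.

Lemma closure_closed W : ffam (gfam (closure W)) = closure W.
Proof.
apply: seteq2E => C D; split.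
  move=> [CD [x [x_CD [C' [D' [[n [n_gt0 WCD']] x_CD']]]]]].
  by exists n.+1; split=> //; split=> //; exists x; split=> //; exists C', D'.
move=> [[|n] [//= _ [CD [x [x_CD Wx]]]]].
split=> //; exists x; split=> //; exists C, D; split=> //.
by exists n.+1; split=> //; split=> //; exists x.
Qed.

Lemma closure_idem W : closure (closure W) = closure W.
Proof.
have iter_closure n : fg_iter n (closure W) = closure W.
  by elim: n => [//|n IH] /=; rewrite IH closure_closed.
apply: seteq2E => C D; split=> [[n [_]]|WCD]; first by rewrite iter_closure.
by exists 1; split=> //; rewrite iter_closure.
Qed.

(* f(V) is contained in its closure, as f(V) is contained in f(g(f(V))). *)
Lemma ffam_sub_closure V : incl2 (ffam V) (closure (ffam V)).
Proof.
move=> C D [CD [x [x_CD Vx]]]; exists 1; split=> //; split=> //.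
by exists x; split=> //; exists C, D; split=> //; split=> //; exists x.
Qed.

Lemma inMleE VV : ML VV -> exists V, VV = aL V.
Proof. by move=> [V VV_V]; exists V; apply: seteq2E. Qed.

Lemma closed_pair VV C D x :
  ML VV -> isPair C D -> CDomega C D x -> gL VV x -> VV C D.
Proof.
move=> /inMleE [V ->] CD x_CD gx; rewrite -[aL V]closure_closed.
by split=> //; exists x.
Qed.

Lemma alpha_le_empty C D : ~ aL (fun _ => False) C D.
Proof.
move=> [n [_]]; elim: n C D => [|n IH] C D /=; first by move=> [_ [x []]].
by move=> [_ [x [_ [C' [D' [/IH]]]]]].
Qed.

Lemma ffam_union (I : Type) (Vs : I -> lword Sigma -> Prop) :
  ffam (fun x => exists i, Vs i x) = fun C D => exists i, ffam (Vs i) C D.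
Proof.
apply: seteq2E => C D; split.
  by move=> [CD [x [x_CD [i Vx]]]]; exists i; split=> //; exists x.
by move=> [i [CD [x [x_CD Vx]]]]; split=> //; exists x; split=> //; exists i.
Qed.

Lemma gfam_union (I : Type) (Ws : I -> lang Sigma -> lang Sigma -> Prop) :
  gfam (fun C D => exists i, Ws i C D) = fun x => exists i, gfam (Ws i) x.
Proof.
apply: functional_extensionality => x; apply: propositional_extensionality.
split=> [[C [D [[i WCD] x_CD]]]|[i [C [D [WCD x_CD]]]]]; first by exists i, C, D.
by exists C, D; split=> //; exists i.
Qed.

Lemma closure_union (I : Type) (Ws : I -> lang Sigma -> lang Sigma -> Prop) :
  seteq2 (closure (fun C D => exists i, Ws i C D))
         (fun C D => exists i, closure (Ws i) C D).
Proof.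
have iter_union n : fg_iter n (fun C D => exists i, Ws i C D) =
                    fun C D => exists i, fg_iter n (Ws i) C D.
  by elim: n => [//|n IH] /=; rewrite IH gfam_union ffam_union.
move=> C D; split=> [[n [n_gt0]]|[i [n [n_gt0 WCD]]]].
  by rewrite iter_union => -[i WCD]; exists i, n.
by exists n; split=> //; rewrite iter_union; exists i.
Qed.

Lemma alpha_star_in U : MS (aS U).
Proof. by move=> C []. Qed.

Lemma alpha_star_mono U U' : incl U U' -> incl (aS U) (aS U').
Proof. by move=> UU' C [CC [u [Cu /UU' U'u]]]; split=> //; exists u. Qed.

Lemma gamma_star_mono UU UU' : incl UU UU' -> incl (gS UU) (gS UU').
Proof. by move=> UU_UU' u [C [/UU_UU' UU'C Cu]]; exists C. Qed.

Lemma alpha_star_cls U u : U u -> aS U (cls_of u).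
Proof. by split; [exists u|exists u; split=> //; apply: cls_of_self]. Qed.

Lemma gamma_starP UU u : MS UU -> (gS UU u <-> UU (cls_of u)).
Proof.
move=> UU_cls; split=> [[C [UUC Cu]]|UUu].
  by rewrite -(class_mem (UU_cls C UUC) Cu).
by exists (cls_of u); split=> //; apply: cls_of_self.
Qed.

Lemma galois_star U UU : MS UU -> (incl (aS U) UU <-> incl U (gS UU)).
Proof.
move=> UU_cls; split=> [aU_UU u Uu|U_gUU C [CC [u [Cu Uu]]]].
  by apply/gamma_starP => //; apply/aU_UU/alpha_star_cls.
by rewrite (class_mem CC Cu); apply/gamma_starP/U_gUU.
Qed.

Lemma alpha_gamma_star UU : MS UU -> seteq (aS (gS UU)) UU.
Proof.
move=> UU_cls C; split; first exact: (galois_star _ UU_cls).2 (fun u gu => gu) C.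
move=> UUC; have [w Cw] := UU_cls C UUC; rewrite Cw; apply: alpha_star_cls.
by apply/gamma_starP; rewrite -?Cw.
Qed.

Lemma alpha_star_union (I : Type) (Us : I -> lang Sigma) :
  seteq (aS (fun u => exists i, Us i u)) (fun C => exists i, aS (Us i) C).
Proof.
move=> C; split=> [[CC [u [Cu [i Uu]]]]|[i [CC [u [Cu Uu]]]]].
  by exists i; split=> //; exists u.
by split=> //; exists u; split=> //; exists i.
Qed.

Lemma gamma_star_union (I : Type) (UUs : I -> lang Sigma -> Prop) :
  seteq (gS (fun C => exists i, UUs i C)) (fun u => exists i, gS (UUs i) u).
Proof.
move=> u; split=> [[C [[i UUC] Cu]]|[i [C [UUC Cu]]]]; first by exists i, C.
by exists C; split=> //; exists i.
Qed.

Lemma alpha_star_bot :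
  MS (aS (fun _ => False)) /\ (forall UU, MS UU -> incl (aS (fun _ => False)) UU).
Proof. by split=> [|UU UU_cls]; [apply: alpha_star_in|apply/galois_star]. Qed.

Lemma gamma_star_bot BB : (forall UU, MS UU -> incl BB UU) ->
  seteq (gS BB) (fun _ => False).
Proof.
move=> BB_least u; split=> // gBBu.
by have [C [/(BB_least _ (@alpha_star_in (fun _ => False))) [_ [v []]]]] := gBBu.
Qed.

Lemma alpha_star_top :
  MS (aS (fun _ => True)) /\ (forall UU, MS UU -> incl UU (aS (fun _ => True))).
Proof.
split=> [|UU UU_cls C UUC]; first exact: alpha_star_in.
by apply: (@alpha_star_mono (gS UU)) ((alpha_gamma_star UU_cls C).2 UUC).
Qed.

Lemma gamma_star_top TT : MS TT -> (forall UU, MS UU -> incl UU TT) ->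
  seteq (gS TT) (fun _ => True).
Proof.
move=> TT_cls TT_greatest u; split=> // _.
by apply: (galois_star _ TT_cls).1 => //; apply/TT_greatest/alpha_star_in.
Qed.

Lemma gamma_star_inter (I : Type) (UUs : I -> lang Sigma -> Prop) :
  (forall i, MS (UUs i)) ->
  seteq (gS (fun C => forall i, UUs i C)) (fun u => forall i, gS (UUs i) u).
Proof.
move=> UUs_cls u; split=> [[C [UUC Cu]] i|gUUu]; first by exists C.
by exists (cls_of u); split=> [i|]; [apply/gamma_starP|apply: cls_of_self].
Qed.

Lemma alpha_le_in V : ML (aL V).
Proof. by exists V. Qed.

Lemma alpha_le_mono V V' : incl V V' -> incl2 (aL V) (aL V').
Proof. by move=> VV'; apply/closure_mono/ffam_mono. Qed.

Lemma galois_le V VV : ML VV -> (incl2 (aL V) VV <-> incl V (gL VV)).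
Proof.
move=> VV_closed; have [V' ->] := inMleE VV_closed; split.
  move=> aV_aV' x Vx; have [C [D [CD x_CD]]] := @cover_pair _ _ delta F x.
  exists C, D; split=> //; apply/aV_aV'/ffam_sub_closure.
  by split=> //; exists x.
move=> V_gV'; rewrite /alpha_le -[closure (ffam V')]closure_idem.
apply: closure_mono; rewrite -closure_closed; exact: ffam_mono.
Qed.

Lemma alpha_gamma_le VV : ML VV -> seteq2 (aL (gL VV)) VV.
Proof.
by move=> /inMleE [V ->] C D; rewrite /alpha_le /gamma_le closure_closed closure_idem.
Qed.

Lemma alpha_le_union (I : Type) (Vs : I -> lword Sigma -> Prop) :
  seteq2 (aL (fun x => exists i, Vs i x)) (fun C D => exists i, aL (Vs i) C D).
Proof. by rewrite /alpha_le ffam_union; apply: closure_union. Qed.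

Lemma gamma_le_union (I : Type) (VVs : I -> lang Sigma -> lang Sigma -> Prop) :
  seteq (gL (fun C D => exists i, VVs i C D)) (fun x => exists i, gL (VVs i) x).
Proof. by move=> x; rewrite /gamma_le gfam_union. Qed.

Lemma alpha_le_bot :
  ML (aL (fun _ => False)) /\ (forall VV, ML VV -> incl2 (aL (fun _ => False)) VV).
Proof. by split=> [|VV VV_closed]; [apply: alpha_le_in|apply/galois_le]. Qed.

Lemma gamma_le_bot BB : (forall VV, ML VV -> incl2 BB VV) ->
  seteq (gL BB) (fun _ => False).
Proof.
move=> BB_least x; split=> // [[C [D [/(BB_least _ (@alpha_le_in (fun _ => False))) CD _]]]].
exact: alpha_le_empty CD.
Qed.

Lemma alpha_le_top :
  ML (aL (fun _ => True)) /\ (forall VV, ML VV -> incl2 VV (aL (fun _ => True))).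
Proof.
split=> [|VV VV_closed C D VVCD]; first exact: alpha_le_in.
by apply: (@alpha_le_mono (gL VV)) ((alpha_gamma_le VV_closed C D).2 VVCD).
Qed.

Lemma gamma_le_top TT : ML TT -> (forall VV, ML VV -> incl2 VV TT) ->
  seteq (gL TT) (fun _ => True).
Proof.
move=> TT_closed TT_greatest x; split=> // _.
by apply: (galois_le _ TT_closed).1 => //; apply/TT_greatest/alpha_le_in.
Qed.

Lemma gamma_le_inter (I : Type) (VVs : I -> lang Sigma -> lang Sigma -> Prop) :
  (forall i, ML (VVs i)) ->
  seteq (gL (fun C D => forall i, VVs i C D)) (fun x => forall i, gL (VVs i) x).
Proof.
move=> VVs_closed x; split=> [[C [D [VVCD x_CD]]] i|gVVx]; first by exists C, D.
have [C [D [CD x_CD]]] := @cover_pair _ _ delta F x.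
by exists C, D; split=> // i; apply: closed_pair (gVVx i).
Qed.

End Galois.

Theorem lemma8 (Sigma : finType) (Q : finType) (delta : Q -> Sigma -> {set Q})
    (q0 : Q) (F : {set Q}) :
  let aS := @alpha_star Sigma Q delta F in
  let gS := @gamma_star Sigma in
  let aL := @alpha_le Sigma Q delta F in
  let gL := @gamma_le Sigma in
  let MS := @inMstar Sigma Q delta F in
  let ML := @inMle Sigma Q delta F in
  (* the maps land in the respective lattices *)
  (forall U, MS (aS U)) /\ (forall V, ML (aL V)) /\
  (* monotonicity *)
  (forall U U', incl U U' -> incl (aS U) (aS U')) /\
  (forall UU UU', MS UU -> MS UU' -> incl UU UU' -> incl (gS UU) (gS UU')) /\
  (forall V V', incl V V' -> incl2 (aL V) (aL V')) /\
  (forall VV VV', ML VV -> ML VV' -> incl2 VV VV' -> incl (gL VV) (gL VV')) /\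
  (* Galois connections *)
  (forall U UU, MS UU -> (incl (aS U) UU <-> incl U (gS UU))) /\
  (forall V VV, ML VV -> (incl2 (aL V) VV <-> incl V (gL VV))) /\
  (* alpha o gamma = id *)
  (forall UU, MS UU -> seteq (aS (gS UU)) UU) /\
  (forall VV, ML VV -> seteq2 (aL (gL VV)) VV) /\
  (* preservation of (arbitrary) unions *)
  (forall (I : Type) (Us : I -> lang Sigma),
      seteq (aS (fun u => exists i, Us i u)) (fun C => exists i, aS (Us i) C)) /\
  (forall (I : Type) (UUs : I -> lang Sigma -> Prop), (forall i, MS (UUs i)) ->
      seteq (gS (fun C => exists i, UUs i C)) (fun u => exists i, gS (UUs i) u)) /\
  (forall (I : Type) (Vs : I -> lword Sigma -> Prop),
      seteq2 (aL (fun x => exists i, Vs i x)) (fun C D => exists i, aL (Vs i) C D)) /\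
  (forall (I : Type) (VVs : I -> lang Sigma -> lang Sigma -> Prop),
      (forall i, ML (VVs i)) ->
      seteq (gL (fun C D => exists i, VVs i C D)) (fun x => exists i, gL (VVs i) x)) /\
  (* preservation of least elements *)
  (MS (aS (fun _ => False)) /\ (forall UU, MS UU -> incl (aS (fun _ => False)) UU)) /\
  (forall BB, MS BB -> (forall UU, MS UU -> incl BB UU) -> seteq (gS BB) (fun _ => False)) /\
  (ML (aL (fun _ => False)) /\ (forall VV, ML VV -> incl2 (aL (fun _ => False)) VV)) /\
  (forall BB, ML BB -> (forall VV, ML VV -> incl2 BB VV) -> seteq (gL BB) (fun _ => False)) /\
  (* preservation of greatest elements *)
  (MS (aS (fun _ => True)) /\ (forall UU, MS UU -> incl UU (aS (fun _ => True)))) /\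
  (forall TT, MS TT -> (forall UU, MS UU -> incl UU TT) -> seteq (gS TT) (fun _ => True)) /\
  (ML (aL (fun _ => True)) /\ (forall VV, ML VV -> incl2 VV (aL (fun _ => True)))) /\
  (forall TT, ML TT -> (forall VV, ML VV -> incl2 VV TT) -> seteq (gL TT) (fun _ => True)) /\
  (* gamma maps preserve (nonempty, arbitrary) intersections *)
  (forall (I : Type) (UUs : I -> lang Sigma -> Prop), inhabited I ->
      (forall i, MS (UUs i)) ->
      seteq (gS (fun C => forall i, UUs i C)) (fun u => forall i, gS (UUs i) u)) /\
  (forall (I : Type) (VVs : I -> lang Sigma -> lang Sigma -> Prop), inhabited I ->
      (forall i, ML (VVs i)) ->
      seteq (gL (fun C D => forall i, VVs i C D)) (fun x => forall i, gL (VVs i) x)).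
Proof.
move=> aS gS aL gL MS ML; rewrite {}/aS {}/gS {}/aL {}/gL {}/MS {}/ML.
split; first exact: alpha_star_in.
split; first exact: alpha_le_in.
split; first exact: alpha_star_mono.
split; first by move=> UU UU' _ _; apply: gamma_star_mono.
split; first exact: alpha_le_mono.
split; first by move=> VV VV' _ _; apply: gfam_mono.
split; first exact: galois_star.
split; first exact: galois_le.
split; first exact: alpha_gamma_star.
split; first exact: alpha_gamma_le.
split; first exact: alpha_star_union.
split; first by move=> I UUs _; apply: gamma_star_union.
split; first exact: alpha_le_union.
split; first by move=> I VVs _; apply: gamma_le_union.
split; first exact: alpha_star_bot.
split; first by move=> BB _; apply: gamma_star_bot.
split; first exact: alpha_le_bot.
split; first by move=> BB _; apply: gamma_le_bot.
split; first exact: alpha_star_top.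
split; first exact: gamma_star_top.
split; first exact: alpha_le_top.
split; first exact: gamma_le_top.
split; first by move=> I UUs _; apply: gamma_star_inter.
by move=> I VVs _; apply: gamma_le_inter.
Qed.
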